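(* Let $R$ be a commutative ring with identity and $n>1$. Every (left or right) zero-divisor in $M_n(R)$ is a two-sided zero-divisor.
   Context: An element $x$ of a ring $S$ is a left (resp. right) zero-divisor if $xy=0$ (resp. $yx=0$) for some nonzero $y\in S$; a two-sided zero-divisor if it is both. *)

From HB Require Import structures.
From mathcomp Require Import all_boot all_order all_algebra.
Set Implicit Arguments. Unset Strict Implicit. Unset Printing Implicit Defensive.
Import GRing.Theory.
Local Open Scope ring_scope.

Definition mx_left_zero_divisor (R : pzRingType) (n : nat) (A : 'M[R]_n) : Prop :=
  exists B : 'M[R]_n, B != 0 /\ A *m B = 0.

Definition mx_right_zero_divisor (R : pzRingType) (n : nat) (A : 'M[R]_n) : Prop :=
  exists B : 'M[R]_n, B != 0 /\ B *m A = 0.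

Definition mx_two_sided_zero_divisor (R : pzRingType) (n : nat) (A : 'M[R]_n) : Prop :=
  mx_left_zero_divisor A /\ mx_right_zero_divisor A.

From HB Require Import structures.
From mathcomp Require Import all_boot all_order all_algebra.

Set Implicit Arguments.
Unset Strict Implicit.
Unset Printing Implicit Defensive.
Local Open Scope ring_scope.
Import GRing.Theory.

(* McCoy's theorem.  If A is a left or right zero-divisor, multiplying the
   relation by the adjugate shows that some entry r != 0 of the witness
   annihilates det A.  Conversely, if r * det A = 0 with r != 0, take t < n
   such that r kills every (t+1)-minor of A but not some t-minor M = A[f, g]
   (the empty minor is 1, and every n-minor is a multiple of det A).  Completing f by a row i0 it misses, the signed cofactors of
   the columns g in the (t+1)-row submatrices A[f + i0, g + j] form a row
   vector c, independent of j, with (r c) A[f + i0, _] = 0 by Laplace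
   expansion; its entry at i0 is r det M != 0.  Transposing handles the
   other side. *)

Lemma nat_pred_boundary (P : pred nat) n : P 0 -> ~~ P n ->
  exists2 t, (t < n)%N & P t && ~~ P t.+1.
Proof.
elim: n => [|n IHn] P0 nPn1; first by rewrite P0 in nPn1.
have [Pn | nPn] := boolP (P n); first by exists n => //; rewrite Pn.
by have [t ltn Pt] := IHn P0 nPn; exists t => //; apply: ltnW.
Qed.

Lemma exists_notin_codom t n (f : 'I_t -> 'I_n) : (t < n)%N ->
  exists i0, forall k, f k != i0.
Proof.
move=> ltn; have : ~~ ([set: 'I_n] \subset f @: [set: 'I_t]).
  apply: contraTN ltn => /subset_leq_card; rewrite cardsT card_ord => le_n_im.
  rewrite -leqNgt (leq_trans le_n_im) //.
  by rewrite (leq_trans (leq_imset_card _ _)) ?cardsT ?card_ord.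
case/subsetPn => i0 _ i0_notin; exists i0 => k.
by apply: contraNneq i0_notin => <-; apply: imset_f.
Qed.

Section Zero_divisors.
Variable R : comPzRingType.

Lemma mx_left_zero_divisor_tr n (A : 'M[R]_n) :
  mx_right_zero_divisor A^T -> mx_left_zero_divisor A.
Proof.
case=> B [B_neq0 BAt0]; exists B^T; split.
  by apply: contra B_neq0 => /eqP BT0; rewrite -[B]trmxK BT0 trmx0.
by rewrite -[A]trmxK -trmx_mul BAt0 trmx0.
Qed.

Lemma mx_right_zero_divisor_row n (A : 'M[R]_n) (y : 'rV[R]_n) :
  y != 0 -> y *m A = 0 -> mx_right_zero_divisor A.
Proof.
move=> /rV0Pn[j yj_neq0] yA0; exists (\matrix_(i, j) y 0 j); split.
  by apply/matrix0Pn; exists j, j; rewrite mxE.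
apply/matrixP => i k; transitivity ((y *m A) 0 k); last by rewrite yA0 !mxE.
by rewrite !mxE; apply: eq_bigr => l _; rewrite mxE.
Qed.

Lemma zero_divisor_det_annihilated n (A : 'M[R]_n) :
  mx_left_zero_divisor A \/ mx_right_zero_divisor A ->
  exists2 r : R, r != 0 & r * \det A = 0.
Proof.
case=> [[B [/matrix0Pn[i [j Bij_neq0]] AB0]] | [B [/matrix0Pn[i [j Bij_neq0]] BA0]]];
  exists (B i j) => //.
- have := congr1 (fun M => (\adj A *m M) i j) AB0.
  by rewrite /= mulmxA mul_adj_mx mul_scalar_mx mulmx0 !mxE mulrC.
- have := congr1 (fun M => (M *m \adj A) i j) BA0.
  by rewrite /= -mulmxA mul_mx_adj mul_mx_scalar mul0mx !mxE mulrC.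
Qed.

Lemma mx_right_zero_divisor_maximal_minor n t (A : 'M[R]_n) (r : R)
    (f g : 'I_t -> 'I_n) : (t < n)%N ->
  r * \det (mxsub f g A) != 0 ->
  (forall F G : 'I_t.+1 -> 'I_n, r * \det (mxsub F G A) = 0) ->
  mx_right_zero_divisor A.
Proof.
move=> ltn minor_neq0 minors0; have [i0 f_neq_i0] := exists_notin_codom f ltn.
pose F k := if unlift ord_max k is Some k' then f k' else i0.
pose G j k := if unlift ord_max k is Some k' then g k' else j.
pose c : 'rV[R]_t.+1 := \row_a cofactor (mxsub F (G i0) A) a ord_max.
have cofactorG j a : cofactor (mxsub F (G j) A) a ord_max = c 0 a.
  rewrite mxE /cofactor; congr (_ * \det _); apply/matrixP => x y.
  by rewrite !mxE /G liftK.
apply: (@mx_right_zero_divisor_row _ _ (r *: (c *m rowsub F 1%:M))).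
  apply/rV0Pn; exists i0; rewrite !mxE.
  rewrite (bigD1 ord_max) //= big1 ?addr0.
    rewrite !mxE /F unlift_none eqxx mulr1 /cofactor.
    rewrite addnn -mul2n exprM sqrrN !expr1n mul1r.
    apply: contra minor_neq0 => /eqP <-; apply/eqP; congr (_ * \det _).
    by apply/matrixP => a b; rewrite !mxE /G !liftK.
  move=> a a_neq_max; rewrite !mxE /F.
  case: unliftP => [a' _|a_max]; last by rewrite a_max eqxx in a_neq_max.
  by rewrite (negbTE (f_neq_i0 a')) mulr0.
rewrite -scalemxAl -mulmxA mul_rowsub_mx mul1mx; apply/rowP => j; rewrite !mxE.
rewrite -[RHS](minors0 F (G j)) (expand_det_col _ ord_max); congr (_ * _).
by apply: eq_bigr => a _; rewrite cofactorG mulrC !mxE /G unlift_none.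
Qed.

Definition scaled_minor_nonzero n (A : 'M[R]_n) (r : R) k : bool :=
  [exists f : {ffun 'I_k -> 'I_n}, exists g : {ffun 'I_k -> 'I_n},
     r * \det (mxsub f g A) != 0].

Lemma det_annihilated_right_zero_divisor n (A : 'M[R]_n) (r : R) :
  r != 0 -> r * \det A = 0 -> mx_right_zero_divisor A.
Proof.
move=> r_neq0 rdet0; case: n A rdet0 => [|n] A rdet0.
  by move: r_neq0; rewrite -[r]mulr1 -(det_mx00 A) rdet0 eqxx.
pose P := scaled_minor_nonzero A r.
have P0 : P 0%N.
  by apply/existsP; exists [ffun=> ord0]; apply/existsP; exists [ffun=> ord0];
     rewrite det_mx00 mulr1.
have nPn : ~~ P n.+1.
  apply/existsP => -[f /existsP[g]]; apply/negP; rewrite negbK.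
  rewrite -[A]mulmx1 -[A]mul1mx mxsub_mul -mul_rowsub_mx !det_mulmx.
  by rewrite -mulrA mulrCA [r * (_ * _)]mulrA rdet0 mul0r mulr0.
have [t ltn /andP[/existsP[f /existsP[g minor_neq0]] nPt1]] :=
  nat_pred_boundary P0 nPn.
apply: (mx_right_zero_divisor_maximal_minor ltn minor_neq0) => F G.
apply/eqP; apply: contraNT nPt1 => minor'_neq0.
apply/existsP; exists (finfun F); apply/existsP; exists (finfun G).
rewrite (_ : mxsub _ _ _ = mxsub F G A) //.
by apply/matrixP => i j; rewrite !mxE !ffunE.
Qed.

End Zero_divisors.

Theorem corollary2 (R : comPzRingType) (n : nat) (hn : (1 < n)%N) (A : 'M[R]_n) :
  mx_left_zero_divisor A \/ mx_right_zero_divisor A ->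
  mx_two_sided_zero_divisor A.
Proof.
move=> /zero_divisor_det_annihilated[r r_neq0 rdet0]; split.
  apply: mx_left_zero_divisor_tr; apply: (det_annihilated_right_zero_divisor r_neq0).
  by rewrite det_tr.
exact: det_annihilated_right_zero_divisor r_neq0 rdet0.
Qed.
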